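(* For all finite strings $s,s'$ over the alphabet $\{\blacktriangledown,\blacktriangle,\triangleleft,\triangleright\}$, if $s$ is a subword of $s'$, then $b(s)\le b(s')$.
   Context: Consider finite strings over the alphabet $\{\blacktriangledown,\blacktriangle,\triangleleft,\triangleright\}$. The allowed replacements (each replaces a contiguous substring equal to its left-hand side by its right-hand side) are: $\triangleleft\blacktriangle\to\triangleleft$, $\triangleleft\blacktriangledown\to\triangleleft$, $\blacktriangle\triangleright\to\triangleright$, $\blacktriangledown\triangleright\to\triangleright$, $\blacktriangle\blacktriangle\to\blacktriangle$, $\blacktriangledown\blacktriangledown\to\blacktriangledown$, $\blacktriangledown\blacktriangle\to\blacktriangle\blacktriangledown$, $\blacktriangle\blacktriangledown\to\blacktriangledown\blacktriangle$, and $\triangleleft\triangleright\to\emptyset$ (the empty string). A rewriting $s\Rightarrow t$ is the simultaneous application to $s$ of several allowed replacements whose left-hand sides occupy pairwise disjoint contiguous substrings of $s$, producing $t$. A rewriting sequence of length $\ell$ from $s$ is a sequence $s=s_0\Rightarrow s_1\Rightarrow\cdots\Rightarrow s_\ell=\emptyset$. $b(s)$ denotes the length of a shortest rewriting sequence from $s$ (taken as $+\infty$ if none exists). A string $s$ is a subword of $s'$ if $s$ can be obtained from $s'$ by deleting some occurrences of the symbols $\blacktriangledown,\blacktriangle$ without changing the order of the remaining symbols. *)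

From Stdlib Require Import List Arith ClassicalEpsilon.
Import ListNotations.

(* The alphabet: Dn = ▼, Up = ▲, L = ◁, R = ▷ *)
Inductive sym : Type := Dn | Up | L | R.

Definition word := list sym.

Inductive rule : word -> word -> Prop :=
  | r_LUp  : rule [L; Up] [L]
  | r_LDn  : rule [L; Dn] [L]
  | r_UpR  : rule [Up; R] [R]
  | r_DnR  : rule [Dn; R] [R]
  | r_UpUp : rule [Up; Up] [Up]
  | r_DnDn : rule [Dn; Dn] [Dn]
  | r_DnUp : rule [Dn; Up] [Up; Dn]
  | r_UpDn : rule [Up; Dn] [Dn; Up]
  | r_LR   : rule [L; R] [].

Inductive piece : word * word -> Prop :=
  | p_keep x : piece ([x], [x])
  | p_rule l r : rule l r -> piece (l, r).

(* s => t : simultaneous application of several (at least one) replacements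
   with pairwise disjoint contiguous left-hand sides. *)
Definition step (s t : word) : Prop :=
  exists ps : list (word * word),
    Forall piece ps /\
    Exists (fun p => rule (fst p) (snd p)) ps /\
    s = concat (map fst ps) /\ t = concat (map snd ps).

Inductive rseq : word -> nat -> Prop :=
  | rseq0 : rseq [] 0
  | rseqS s t n : step s t -> rseq t n -> rseq s (S n).

(* b(s) : length of a shortest rewriting sequence; None = +infinity *)
Definition b (s : word) : option nat :=
  match excluded_middle_informative (exists n, rseq s n) with
  | left H => Some (epsilon (inhabits 0)
                      (fun n => rseq s n /\ forall m, rseq s m -> n <= m))
  | right _ => None
  end.

Definition le_inf (x y : option nat) : Prop :=
  match x, y with
  | _, None => True
  | None, Some _ => False
  | Some a, Some c => a <= c
  end.

Inductive subword : word -> word -> Prop :=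
  | sw_nil : subword [] []
  | sw_keep x s s' : subword s s' -> subword (x :: s) (x :: s')
  | sw_delDn s s' : subword s s' -> subword s (Dn :: s')
  | sw_delUp s s' : subword s s' -> subword s (Up :: s').

(* Deleting arrows commutes with rewriting.  If s is a subword of s' and
   s' => t', cut the parallel step into its replaced and untouched pieces and
   delete from each piece the arrows missing in s: what remains of a
   replaced piece is either again a left-hand side, whose right-hand side is
   a subword of the original one, or already a subword of the original
   right-hand side and can be left untouched.  Hence s => t or s = t for some
   subword t of t', and by induction every rewriting sequence from s' is
   shadowed by one from s that is at most as long. *)

From Stdlib Require Import List Lia Classical ClassicalEpsilon Wf_nat.
Import ListNotations.

Lemma subword_refl s : subword s s.
Proof. induction s; constructor; auto. Qed.

Lemma subword_nil_r s : subword s [] -> s = [].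
Proof. intro H; inversion H; reflexivity. Qed.

Lemma subword_app s1 s1' s2 s2' :
  subword s1 s1' -> subword s2 s2' -> subword (s1 ++ s2) (s1' ++ s2').
Proof. intros H1 H2; induction H1; simpl; try constructor; auto. Qed.

Lemma subword_app_r_inv s u' v' : subword s (u' ++ v') ->
  exists u v, s = u ++ v /\ subword u u' /\ subword v v'.
Proof.
  revert s; induction u' as [|x u' IH]; simpl; intros s H.
  - exists [], s; repeat split; auto; constructor.
  - inversion H as [|? s0 ? H0|? ? H0|? ? H0]; subst;
      destruct (IH _ H0) as [u [v [-> [Hu Hv]]]].
    + exists (x :: u), v; repeat split; auto; constructor; auto.
    + exists u, v; repeat split; auto; constructor; auto.
    + exists u, v; repeat split; auto; constructor; auto.
Qed.

Lemma piece_subword l r l0 : piece (l, r) -> subword l0 l ->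
  (exists r0, rule l0 r0 /\ subword r0 r) \/ subword l0 r.
Proof.
  intros P H; inversion P as [x | ? ? Hrule]; subst.
  - right; exact H.
  - inversion Hrule; subst;
      repeat match goal with
             | Hs : subword _ (_ :: _) |- _ => inversion Hs; subst; clear Hs
             | Hs : subword _ [] |- _ => inversion Hs; subst; clear Hs
             end;
      try (left; eexists; split; [constructor | apply subword_refl]);
      right; repeat constructor.
Qed.

Definition lhs (ps : list (word * word)) : word := concat (map fst ps).
Definition rhs (ps : list (word * word)) : word := concat (map snd ps).
Definition rule_piece (p : word * word) : Prop := rule (fst p) (snd p).

Lemma lhs_app ps qs : lhs (ps ++ qs) = lhs ps ++ lhs qs.
Proof. unfold lhs; rewrite map_app, concat_app; reflexivity. Qed.

Lemma rhs_app ps qs : rhs (ps ++ qs) = rhs ps ++ rhs qs.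
Proof. unfold rhs; rewrite map_app, concat_app; reflexivity. Qed.

Definition letter_pieces (s : word) : list (word * word) :=
  map (fun x => ([x], [x])) s.

Lemma letter_pieces_piece s : Forall piece (letter_pieces s).
Proof. apply Forall_forall; intros p Hp; apply in_map_iff in Hp as [x [<- _]]; constructor. Qed.

Lemma lhs_letter_pieces s : lhs (letter_pieces s) = s.
Proof. induction s as [|x s IH]; [reflexivity | exact (f_equal (cons x) IH)]. Qed.

Lemma rhs_letter_pieces s : rhs (letter_pieces s) = s.
Proof. induction s as [|x s IH]; [reflexivity | exact (f_equal (cons x) IH)]. Qed.

Lemma pieces_subword ps s : Forall piece ps -> subword s (lhs ps) ->
  exists ps0, Forall piece ps0 /\ s = lhs ps0 /\ subword (rhs ps0) (rhs ps) /\
    (Exists rule_piece ps0 \/ lhs ps0 = rhs ps0).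
Proof.
  intros Hps; revert s; induction Hps as [|[l r] ps Hp Hps IH]; intros s H.
  - apply subword_nil_r in H as ->.
    exists []; repeat split; auto; constructor.
  - destruct (subword_app_r_inv _ _ _ H) as [u [v [-> [Hu Hv]]]].
    destruct (IH _ Hv) as [ps0 [Hps0 [-> [Hrhs Hkind]]]].
    destruct (piece_subword _ _ _ Hp Hu) as [[r0 [Hr0 Hsub]] | Hsub].
    + exists ((u, r0) :: ps0); repeat split.
      * constructor; [apply p_rule|]; assumption.
      * apply subword_app; assumption.
      * left; constructor; exact Hr0.
    + exists (letter_pieces u ++ ps0).
      rewrite lhs_app, rhs_app, lhs_letter_pieces, rhs_letter_pieces; repeat split.
      * apply Forall_app; split; [apply letter_pieces_piece | exact Hps0].
      * apply subword_app; assumption.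
      * destruct Hkind as [Hex | Heq].
        -- left; apply Exists_app; right; exact Hex.
        -- right; rewrite Heq; reflexivity.
Qed.

Lemma step_subword s s' t' : step s' t' -> subword s s' ->
  exists t, subword t t' /\ (step s t \/ s = t).
Proof.
  intros [ps [Hps [_ [-> ->]]]] H.
  destruct (pieces_subword ps s Hps H) as [ps0 [Hps0 [-> [Hrhs Hkind]]]].
  exists (rhs ps0); split; [exact Hrhs|].
  destruct Hkind as [Hex | Heq].
  - left; exists ps0; repeat split; assumption.
  - right; exact Heq.
Qed.

Lemma rseq_subword s s' n : rseq s' n -> subword s s' ->
  exists m, m <= n /\ rseq s m.
Proof.
  intros Hseq; revert s; induction Hseq as [|s' t' n Hstep Hseq IH]; intros s H.
  - apply subword_nil_r in H as ->; exists 0; split; [reflexivity | constructor].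
  - destruct (step_subword _ _ _ Hstep H) as [t [Ht [Hst | ->]]];
      destruct (IH _ Ht) as [m [Hm Hseq_t]].
    + exists (S m); split; [lia | econstructor; eassumption].
    + exists m; split; [lia | exact Hseq_t].
Qed.

Lemma ex_least_nat (P : nat -> Prop) : (exists n, P n) ->
  exists n, P n /\ forall m, P m -> n <= m.
Proof.
  intro Hex.
  destruct (dec_inh_nat_subset_has_unique_least_element P (fun n => classic (P n)) Hex)
    as [n [[Hn Hmin] _]].
  exists n; split; assumption.
Qed.

Lemma b_rseq s n : rseq s n -> exists k, b s = Some k /\ k <= n.
Proof.
  intro Hn; unfold b.
  destruct (excluded_middle_informative (exists n, rseq s n)) as [Hex | Hnot];
    [| exfalso; apply Hnot; exists n; exact Hn].
  eexists; split; [reflexivity|].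
  apply (epsilon_spec _ _ (ex_least_nat _ Hex)), Hn.
Qed.

Lemma rseq_b s k : b s = Some k -> rseq s k.
Proof.
  unfold b; destruct (excluded_middle_informative (exists n, rseq s n)) as [Hex |];
    [| discriminate].
  intros [= <-]; apply (epsilon_spec _ _ (ex_least_nat _ Hex)).
Qed.

Theorem theorem4 (s s' : word) : subword s s' -> le_inf (b s) (b s').
Proof.
  intro H.
  destruct (b s') as [k|] eqn:Hb'; [| destruct (b s); exact I].
  destruct (rseq_subword s s' k (rseq_b _ _ Hb') H) as [m [Hmk Hm]].
  destruct (b_rseq s m Hm) as [j [-> Hjm]].
  simpl; lia.
Qed.
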